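(* Let $n \ge 1$ and let $x_1, \dots, x_n$ be real numbers satisfying $$x_1 > -x_2 > x_3 > \cdots > (-1)^{n+1} x_n > 0,$$ i.e. $(-1)^{i+1}x_i > (-1)^{i+2}x_{i+1}$ for $1 \le i \le n-1$ and $(-1)^{n+1}x_n > 0$. For $1 \le r \le n$ let $$s_r = \sum_{1 \le i_1 < i_2 < \cdots < i_r \le n} x_{i_1} x_{i_2} \cdots x_{i_r}$$ be the $r$-th elementary symmetric polynomial in $x_1,\dots,x_n$. Then for every integer $d \ge 0$ (and whenever the index lies in $\{1,\dots,n\}$): $$s_{4d+1} > 0,\quad s_{4d+2} < 0,\quad s_{4d+3} < 0,\quad s_{4d+4} > 0.$$ *)

From HB Require Import structures.
From mathcomp Require Import all_boot all_order all_algebra.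
Set Implicit Arguments. Unset Strict Implicit. Unset Printing Implicit Defensive.
Import Order.TTheory GRing.Theory Num.Theory.
Local Open Scope ring_scope.

Definition elem_sym (R : comRingType) (n : nat) (x : 'I_n -> R) (r : nat) : R :=
  \sum_(A : {set 'I_n} | #|A| == r) \prod_(i in A) x i.

From HB Require Import structures.
From mathcomp Require Import all_boot all_order all_algebra.
From mathcomp Require Import ring lra.
Set Implicit Arguments. Unset Strict Implicit. Unset Printing Implicit Defensive.
Import Order.TTheory GRing.Theory Num.Theory.
Local Open Scope ring_scope.

(* Write x_i = (-1)^i y_i, so that the hypothesis says y_0 > y_1 > ... > y_(n-1) > 0,
   and let E_r = (-1)^floor(r/2) s_r.  Prepending a new largest value a to y (which flips the
   signs of all the old x_i) gives the recursions
     E_(2k+2)(a :: y) = E_(2k+2)(y) + a E_(2k+1)(y),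
     E_(2k+1)(a :: y) = a E_(2k)(y) - E_(2k+1)(y),
   and, by induction on y, the invariants E_r >= 0 and E_(2k+1) <= y_0 E_(2k) make
   every E_r with r <= n positive. *)

Definition esym_poly (R : comNzRingType) (s : seq R) : {poly R} :=
  \prod_(a <- s) (a%:P * 'X + 1).

Section ElementarySymmetric.
Variable R : comNzRingType.
Implicit Types (a : R) (s : seq R).

Lemma elem_symE n (x : 'I_n -> R) r :
  elem_sym x r = (esym_poly [seq x i | i <- enum 'I_n])`_r.
Proof.
rewrite /esym_poly big_map big_enum /= bigA_distr coef_sum /elem_sym.
have prod_mkcond (J : {set 'I_n}) :
    \prod_i (if i \in J then (x i)%:P * 'X else 1) = (\prod_(i in J) x i)%:P * 'X^#|J|.
  by rewrite -big_mkcond /= big_split /= rmorph_prod prodr_const.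
under [RHS]eq_bigr => J _ do rewrite prod_mkcond coefCM coefXn.
rewrite [RHS](bigID (fun J : {set 'I_n} => #|J| == r)) /=.
rewrite [X in _ = _ + X]big1 ?addr0; last first.
  by move=> J /negbTE; rewrite eq_sym => ->; rewrite mulr0.
by apply: eq_bigr => J /eqP ->; rewrite eqxx mulr1.
Qed.

Lemma esym_poly_nil : esym_poly [::] = 1 :> {poly R}.
Proof. by rewrite /esym_poly big_nil. Qed.

Lemma coef0_esym_poly s : (esym_poly s)`_0 = 1.
Proof.
elim: s => [|a s IHs]; first by rewrite esym_poly_nil coef1.
by rewrite /esym_poly big_cons mulrDl mul1r coefD -mulrA coefCM coefXM mulr0 add0r.
Qed.

Lemma coefS_esym_poly_cons a s r :
  (esym_poly (a :: s))`_r.+1 = a * (esym_poly s)`_r + (esym_poly s)`_r.+1.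
Proof. by rewrite /esym_poly big_cons mulrDl mul1r coefD -mulrA coefCM coefXM. Qed.

Lemma coef_esym_poly_opp s r :
  (esym_poly (map -%R s))`_r = (-1) ^+ r * (esym_poly s)`_r.
Proof.
elim: s r => [|a s IHs] [|r]; rewrite ?coef0_esym_poly ?mulr1 //.
  by rewrite /= esym_poly_nil coef1 mulr0.
by rewrite /= !coefS_esym_poly_cons !IHs exprS; ring.
Qed.

Fixpoint alt s := if s is a :: s' then a :: map -%R (alt s') else [::].

Lemma size_alt s : size (alt s) = size s.
Proof. by elim: s => //= a s IHs; rewrite size_map IHs. Qed.

Lemma nth_alt s i : nth 0 (alt s) i = (-1) ^+ i * nth 0 s i.
Proof.
elim: s i => [|a s IHs] [|i] /=; rewrite ?nth_nil ?mulr0 ?mul1r //.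
have [lt_i_s | le_s_i] := ltnP i (size (alt s)).
  by rewrite (nth_map 0) // IHs exprS mulN1r mulNr.
by rewrite !nth_default ?size_map ?mulr0 ?oppr0 // -(size_alt s).
Qed.

Lemma altK : involutive alt.
Proof.
move=> s; apply: (@eq_from_nth _ 0) => [|i _]; first by rewrite !size_alt.
by rewrite !nth_alt mulrA -expr2 -exprM mulnC exprM sqrrN expr1n expr1n mul1r.
Qed.

End ElementarySymmetric.

Section SignPattern.
Variable R : realFieldType.
Implicit Types (a : R) (y w : seq R).

Definition sesym_even y k := (-1) ^+ k * (esym_poly (alt y))`_k.*2.
Definition sesym_odd y k := (-1) ^+ k * (esym_poly (alt y))`_k.*2.+1.

Lemma sign_double k : (-1) ^+ k.*2 = 1 :> R.
Proof. by rewrite -mul2n exprM sqrrN !expr1n. Qed.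

Lemma sesym_even0 y : sesym_even y 0 = 1.
Proof. by rewrite /sesym_even coef0_esym_poly mulr1. Qed.

Lemma sesym_even_nil k : sesym_even [::] k.+1 = 0.
Proof. by rewrite /sesym_even /= esym_poly_nil coef1 mulr0. Qed.

Lemma sesym_odd_nil k : sesym_odd [::] k = 0.
Proof. by rewrite /sesym_odd /= esym_poly_nil coef1 mulr0. Qed.

Lemma sesym_even_cons a w k :
  sesym_even (a :: w) k.+1 = sesym_even w k.+1 + a * sesym_odd w k.
Proof.
rewrite /sesym_even /sesym_odd /= doubleS coefS_esym_poly_cons.
by rewrite !coef_esym_poly_opp !exprS sign_double; ring.
Qed.

Lemma sesym_odd_cons a w k :
  sesym_odd (a :: w) k = a * sesym_even w k - sesym_odd w k.
Proof.
rewrite /sesym_odd /sesym_even /= coefS_esym_poly_cons.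
by rewrite !coef_esym_poly_opp !exprS sign_double; ring.
Qed.

Lemma sorted_rcons0_cons a w : sorted >%R (rcons (a :: w) 0) ->
  [/\ 0 < a, head 0 w < a & sorted >%R (rcons w 0)].
Proof.
rewrite /= (path_sortedE (rev_trans lt_trans)) all_rcons.
move=> /andP[/andP[a_gt0 w_lt_a] w_sorted]; split=> //.
by case: w w_lt_a w_sorted => //= b w /andP[].
Qed.

Lemma sesym_ge0 y : sorted >%R (rcons y 0) ->
  [/\ forall k, 0 <= sesym_even y k, forall k, 0 <= sesym_odd y k
    & forall k, sesym_odd y k <= head 0 y * sesym_even y k].
Proof.
elim: y => [|a w IHw].
  by split=> [[|k]|k|k]; rewrite ?sesym_even0 ?sesym_even_nil ?sesym_odd_nil ?mul0r.
move=> /sorted_rcons0_cons[a_gt0 w0_lt_a /IHw[ev_ge0 od_ge0 od_le]].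
have ev_ge0_cons k : 0 <= sesym_even (a :: w) k.
  case: k => [|k]; rewrite ?sesym_even0 // sesym_even_cons.
  by have := ev_ge0 k.+1; have := od_ge0 k; nra.
have ev_le_cons k : sesym_even w k <= sesym_even (a :: w) k.
  case: k => [|k]; rewrite ?sesym_even0 // sesym_even_cons.
  by have := od_ge0 k; nra.
split=> // k; rewrite sesym_odd_cons.
  by have := od_le k; have := ev_ge0 k; nra.
by have := ev_le_cons k; have := od_ge0 k; have := ev_ge0 k; rewrite /=; nra.
Qed.

Lemma sesym_gt0 y : sorted >%R (rcons y 0) ->
  (forall k, (k.*2 <= size y)%N -> 0 < sesym_even y k) /\
  (forall k, (k.*2.+1 <= size y)%N -> 0 < sesym_odd y k).
Proof.
elim: y => [|a w IHw]; first by split=> [[|k]|//]; rewrite ?sesym_even0.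
move=> /sorted_rcons0_cons[a_gt0 w0_lt_a w_sorted].
have [ev_gt0 od_gt0] := IHw w_sorted; have [ev_ge0 _ od_le] := sesym_ge0 w_sorted.
split=> [[|k]|k] /= lt_k_w; rewrite ?sesym_even0 // ?sesym_even_cons ?sesym_odd_cons.
  by have := od_gt0 k lt_k_w; have := ev_ge0 k.+1; nra.
by have := ev_gt0 k lt_k_w; have := od_le k; nra.
Qed.

Lemma esym_alt_sign y r : sorted >%R (rcons y 0) -> (r <= size y)%N ->
  0 < (-1) ^+ r./2 * (esym_poly (alt y))`_r.
Proof.
move=> /sesym_gt0[ev_gt0 od_gt0]; rewrite -{1 3}(odd_double_half r).
by case: (odd r) => r_le_y; [apply: od_gt0 | apply: ev_gt0].
Qed.

Lemma sign_half_4 d q : (-1) ^+ (4 * d + q)./2 = (-1) ^+ q./2 :> R.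
Proof.
have -> : ((4 * d + q)./2 = d.*2 + q./2)%N.
  by rewrite -[4%N]/(2 * 2)%N -mulnA !mul2n halfD odd_double doubleK.
by rewrite exprD sign_double mul1r.
Qed.

Lemma sorted_alt_ord n (x : 'I_n -> R)
  (hchain : forall i j : 'I_n, val j = (val i).+1 ->
      (-1) ^+ (val i).+1 * x j < (-1) ^+ (val i) * x i)
  (hlast : forall i : 'I_n, val i = n.-1 -> 0 < (-1) ^+ (val i) * x i) :
  sorted >%R (rcons (alt [seq x i | i <- enum 'I_n]) 0).
Proof.
have nth_y (i : 'I_n) : nth 0 (alt [seq x i | i <- enum 'I_n]) i = (-1) ^+ i * x i.
  by rewrite nth_alt (nth_map i) ?size_enum_ord // nth_ord_enum.
apply/(sortedP 0) => i; rewrite size_rcons size_alt size_map size_enum_ord ltnS.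
move=> lt_i_n; have /= y_i := nth_y (Ordinal lt_i_n).
rewrite !nth_rcons size_alt size_map size_enum_ord lt_i_n y_i.
case: (ltngtP i.+1 n) => [lt_Si_n | | Si_eq_n]; last 2 first.
- by rewrite ltnS leqNgt lt_i_n.
- by apply: (hlast (Ordinal lt_i_n)); rewrite /= -Si_eq_n.
by rewrite (nth_y (Ordinal lt_Si_n)); apply: (hchain (Ordinal lt_i_n)).
Qed.

End SignPattern.

Theorem theorem1 (R : realFieldType) (n : nat) (x : 'I_n -> R)
  (hn : (1 <= n)%N)
  (hchain : forall i j : 'I_n, val j = (val i).+1 ->
      (-1) ^+ (val i).+1 * x j < (-1) ^+ (val i) * x i)
  (hlast : forall i : 'I_n, val i = n.-1 -> 0 < (-1) ^+ (val i) * x i) :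
  forall d : nat,
    ((4 * d + 1 <= n)%N -> 0 < elem_sym x (4 * d + 1)) /\
    ((4 * d + 2 <= n)%N -> elem_sym x (4 * d + 2) < 0) /\
    ((4 * d + 3 <= n)%N -> elem_sym x (4 * d + 3) < 0) /\
    ((4 * d + 4 <= n)%N -> 0 < elem_sym x (4 * d + 4)).
Proof.
move=> d; set y := alt [seq x i | i <- enum 'I_n].
have y_sorted : sorted >%R (rcons y 0) := sorted_alt_ord hchain hlast.
have size_y : size y = n by rewrite size_alt size_map size_enum_ord.
have sign r : (r <= n)%N -> 0 < (-1) ^+ r./2 * elem_sym x r.
  rewrite -{1}size_y elem_symE -(altK [seq x i | i <- enum 'I_n]).
  exact: esym_alt_sign.
have sign4 q : (4 * d + q <= n)%N -> 0 < (-1) ^+ q./2 * elem_sym x (4 * d + q).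
  by move=> /sign; rewrite sign_half_4.
split; [|split; [|split]] => /sign4 /=; rewrite ?expr0 ?mul1r ?expr1 ?mulN1r ?oppr_gt0 //.
by rewrite sqrrN expr1n mul1r.
Qed.
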